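(* Let $V$ and $W$ be two-dimensional inner-product spaces, and let $x,y\in V$ be linearly independent vectors of equal length, with $\theta$ the angle between them. Then for every linear map $A\in\mathrm{Hom}(V,W)$, \[ |A|^2\le\frac{2}{1-\cos\theta}\left(\frac{|Ax|^2}{|x|^2}+\frac{|Ay|^2}{|y|^2}+\frac{|A(x+y)|^2}{|x+y|^2}\right). \]
   Context: $|A|$ denotes the Frobenius (Hilbert–Schmidt) norm of $A$ with respect to the inner products on $V$ and $W$. *)

From HB Require Import structures.
From mathcomp Require Import all_boot all_order all_algebra.
From mathcomp Require Import all_classical all_reals.
From mathcomp Require Import reals trigo.
Set Implicit Arguments. Unset Strict Implicit. Unset Printing Implicit Defensive.
Import Order.TTheory GRing.Theory Num.Theory.
Local Open Scope ring_scope.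

(* A two-dimensional real inner-product space is modelled (via an orthonormal
   basis) by row vectors 'rV[R]_2 with the standard dot product; a linear map
   V -> W is a matrix acting on row vectors: A x := x *m A. *)
Definition dotv (R : realType) (n : nat) (u v : 'rV[R]_n) : R := (u *m v^T) 0 0.
Definition normv (R : realType) (n : nat) (u : 'rV[R]_n) : R := Num.sqrt (dotv u u).
(* Frobenius (Hilbert-Schmidt) norm; in orthonormal bases it is the sqrt of the
   sum of the squared entries. *)
Definition frob (R : realType) (m n : nat) (A : 'M[R]_(m, n)) : R :=
  Num.sqrt (\sum_(i < m) \sum_(j < n) A i j ^+ 2).

From HB Require Import structures.
From mathcomp Require Import all_boot all_order all_algebra.
From mathcomp Require Import all_classical all_reals.
From mathcomp Require Import reals trigo.
From mathcomp Require Import ring lra.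
Set Implicit Arguments. Unset Strict Implicit. Unset Printing Implicit Defensive.
Import Order.TTheory GRing.Theory Num.Theory.
Local Open Scope ring_scope.

(* With N = |x|^2 = |y|^2, g = <x,y>, P = |Ax|^2, Q = |Ay|^2 and s = <Ax,Ay>,
   inverting the Gram matrix of (x, y) expresses the Frobenius norm as
   |A|^2 (N^2 - g^2) = N (P + Q) - 2 g s.  Substituting this and
   |A(x+y)|^2 = P + Q + 2 s, |x+y|^2 = 2 (N + g), the right-hand side of the
   inequality exceeds |A|^2 by exactly (P + Q + |A(x+y)|^2) / (N - g) >= 0. *)

Section DotProduct.
Variables (R : realType) (n : nat).
Implicit Types u v : 'rV[R]_n.

Lemma dotvvE u : dotv u u = \sum_j u 0 j ^+ 2.
Proof. by rewrite /dotv !mxE; apply: eq_bigr => j _; rewrite mxE. Qed.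

Lemma dotvv_ge0 u : 0 <= dotv u u.
Proof. by rewrite dotvvE; apply: sumr_ge0 => j _; apply: sqr_ge0. Qed.

Lemma sqr_normv u : normv u ^+ 2 = dotv u u.
Proof. by rewrite /normv sqr_sqrtr // dotvv_ge0. Qed.

Lemma dotvC u v : dotv u v = dotv v u.
Proof. by rewrite /dotv !mxE; apply: eq_bigr => j _; rewrite !mxE mulrC. Qed.

Lemma dotvDl u v w : dotv (u + v) w = dotv u w + dotv v w.
Proof. by rewrite /dotv mulmxDl mxE. Qed.

Lemma dotvDD u v : dotv (u + v) (u + v) = dotv u u + dotv v v + 2 * dotv u v.
Proof. by rewrite !dotvDl ![dotv _ (u + v)]dotvC !dotvDl (dotvC v u); ring. Qed.

End DotProduct.

Lemma sum_ord2 (V : nmodType) (F : 'I_2 -> V) : \sum_(i < 2) F i = F 0 + F 1.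
Proof. by rewrite big_ord_recr big_ord1; congr (F _ + F _); apply: val_inj. Qed.

Lemma det_mx22 (R : comNzRingType) (M : 'M[R]_2) :
  \det M = M 0 0 * M 1 1 - M 0 1 * M 1 0.
Proof.
rewrite (expand_det_row _ 0) sum_ord2 /cofactor !det_mx11 !mxE.
have -> : lift (0 : 'I_2) (0 : 'I_1) = 1 by apply/val_inj.
have -> : lift (1 : 'I_2) (0 : 'I_1) = 0 by apply/val_inj.
by rewrite expr0 expr1 /=; ring.
Qed.

Lemma col_mx_row0 (T : Type) (n : nat) (u v : 'rV[T]_n) j : col_mx u v 0 j = u 0 j.
Proof. by rewrite -(col_mxEu u v 0 j); congr (col_mx u v _ j); apply/val_inj. Qed.

Lemma col_mx_row1 (T : Type) (n : nat) (u v : 'rV[T]_n) j : col_mx u v 1 j = v 0 j.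
Proof. by rewrite -(col_mxEd u v 0 j); congr (col_mx u v _ j); apply/val_inj. Qed.

Section Coordinates2.
Variable R : realType.
Implicit Types (u v : 'rV[R]_2) (A : 'M[R]_2).

Lemma dotv2E u v : dotv u v = u 0 0 * v 0 0 + u 0 1 * v 0 1.
Proof. by rewrite /dotv !mxE !sum_ord2 !mxE. Qed.

Lemma mulmx2E u A j : (u *m A) 0 j = u 0 0 * A 0 j + u 0 1 * A 1 j.
Proof. by rewrite !mxE sum_ord2. Qed.

Lemma sqr_frob2 A : frob A ^+ 2 = A 0 0 ^+ 2 + A 0 1 ^+ 2 + A 1 0 ^+ 2 + A 1 1 ^+ 2.
Proof.
rewrite /frob sqr_sqrtr; last by do 2!apply: sumr_ge0 => ? _; apply: sqr_ge0.
by rewrite !sum_ord2 addrA.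
Qed.

Lemma det_col_mx2 u v : \det (col_mx u v) = u 0 0 * v 0 1 - u 0 1 * v 0 0.
Proof. by rewrite det_mx22 !col_mx_row0 !col_mx_row1. Qed.

Lemma sqr_det_col_mx2 u v :
  \det (col_mx u v) ^+ 2 = dotv u u * dotv v v - dotv u v ^+ 2.
Proof. by rewrite det_col_mx2 !dotv2E; ring. Qed.

Lemma sqr_frob2_gram u v A :
  frob A ^+ 2 * \det (col_mx u v) ^+ 2 =
    dotv v v * dotv (u *m A) (u *m A) + dotv u u * dotv (v *m A) (v *m A)
    - 2 * dotv u v * dotv (u *m A) (v *m A).
Proof. by rewrite sqr_frob2 det_col_mx2 !dotv2E !mulmx2E; ring. Qed.

End Coordinates2.

Lemma frob_gram_bound (R : realFieldType) (N g P Q s F : R) :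
  0 <= N -> 0 < N * N - g ^+ 2 -> 0 <= P -> 0 <= Q -> 0 <= P + Q + 2 * s ->
  F * (N * N - g ^+ 2) = N * P + N * Q - 2 * g * s ->
  F <= 2 / (1 - g / N) * (P / N + Q / N + (P + Q + 2 * s) / (N + N + 2 * g)).
Proof.
move=> N_ge0 disc_gt0 P_ge0 Q_ge0 PQs_ge0 HF.
have [Nmg_gt0 Npg_gt0] : 0 < N - g /\ 0 < N + g by split; nra.
have -> : 2 / (1 - g / N) * (P / N + Q / N + (P + Q + 2 * s) / (N + N + 2 * g))
          = F + 2 * (P + Q + s) / (N - g).
  rewrite -[F](mulfK (lt0r_neq0 disc_gt0)) HF; field.
  by rewrite !lt0r_neq0 //; lra.
by rewrite lerDl divr_ge0 //; lra.
Qed.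

Theorem lemmaA2 (R : realType) (x y : 'rV[R]_2) (theta : R)
  (Hfree : row_free (col_mx x y))
  (Hlen : normv x = normv y)
  (Htheta : 0 <= theta <= pi)
  (Hcos : cos theta = dotv x y / (normv x * normv y))
  (A : 'M[R]_(2, 2)) :
  frob A ^+ 2 <=
    2 / (1 - cos theta) *
      (normv (x *m A) ^+ 2 / normv x ^+ 2
       + normv (y *m A) ^+ 2 / normv y ^+ 2
       + normv ((x + y) *m A) ^+ 2 / normv (x + y) ^+ 2).
Proof.
have det_neq0 : \det (col_mx x y) != 0 by rewrite -unitfE -unitmxE -row_free_unit.
have Nyx : dotv y y = dotv x x by rewrite -!sqr_normv Hlen.
have normxy : normv x * normv y = dotv x x by rewrite -Hlen -expr2 sqr_normv.
rewrite Hcos normxy !sqr_normv mulmxDl !dotvDD Nyx.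
apply: frob_gram_bound; rewrite ?dotvv_ge0 //.
- by rewrite -{2}Nyx -sqr_det_col_mx2 lt_def sqrf_eq0 det_neq0 sqr_ge0.
- by rewrite -(dotvDD (x *m A)) dotvv_ge0.
- by rewrite -{2}Nyx -sqr_det_col_mx2 sqr_frob2_gram Nyx.
Qed.
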